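(* There exists an invertible $21\times21$ binary matrix such that the corresponding linear kernel has partial distance sequence $(1,2,2,2,2,2,4,4,4,4,4,4,8,8,8,8,8,8,12,12,12)$. Consequently $E_{21}\ge\frac1{21}\sum_{i=0}^{20}\log_{21}D_{min}^{(i)}\approx0.49604$.
   Context: A kernel of dimension $\ell$ is a bijection $g:\{0,1\}^\ell\to\{0,1\}^\ell$; a linear kernel is $g({\bf u})={\bf u}G$ over $\mathbb{F}_2$ for an invertible $\ell\times\ell$ binary matrix $G$. ${\bf a}\bullet{\bf b}$ denotes concatenation, $d_H$ Hamming distance. Partial distances: $D_{min}^{(i)}=\min\{d_H(g({\bf w}\bullet 0\bullet{\bf u}),g({\bf w}\bullet 1\bullet {\bf v})) : {\bf w}\in\{0,1\}^i,\ {\bf u},{\bf v}\in\{0,1\}^{\ell-i-1}\}$, $i=0,\dots,\ell-1$; exponent $E(g)=\frac1\ell\sum_{i}\log_\ell D_{min}^{(i)}$; $E_\ell=\max_g E(g)$ over all kernels of dimension $\ell$. *)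

From HB Require Import structures.
From mathcomp Require Import all_boot all_order all_algebra all_fingroup.

Set Implicit Arguments.
Unset Strict Implicit.
Unset Printing Implicit Defensive.

Definition f0 : 'F_2 := 0%R.
Definition f1 : 'F_2 := 1%R.

From Stdlib Require Import Reals.

Definition word (l : nat) := 'rV['F_2]_l.

Definition dH (l : nat) (x y : word l) : nat := (\sum_(j < l) (x ord0 j != y ord0 j))%N.

Definition split_pair (l i : nat) (x y : word l) : bool :=
  [forall j : 'I_l, ((j < i)%N ==> (x ord0 j == y ord0 j))] &&
  [forall j : 'I_l, ((j == i :> nat) ==> ((x ord0 j == f0) && (y ord0 j == f1)))].

(* partial distance D_min^(i) of a map g : {0,1}^l -> {0,1}^l.
   The minimum is over a nonempty finite set (for i < l) of values <= l,
   so the neutral element l of the min-fold is harmless. *)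
Definition partial_dist (l : nat) (g : word l -> word l) (i : nat) : nat :=
  \big[minn/l]_(x : word l) \big[minn/l]_(y : word l | split_pair i x y) dH (g x) (g y).

Definition linear_kernel (l : nat) (G : 'M['F_2]_l) : word l -> word l :=
  fun u => mulmx u G.

Definition logb (l : nat) (x : R) : R := (ln x / ln (INR l))%R.

Definition exponent (l : nat) (g : word l -> word l) : R :=
  (/ INR l * \big[Rplus/0%R]_(i < l) logb l (INR (partial_dist g i)))%R.

(* E_l = max over all kernels (bijections of {0,1}^l) of E(g).
   Exponents of bijections are >= 0 (all D >= 1), so 0 is a harmless seed. *)
Definition E_max (l : nat) : R :=
  \big[Rmax/0%R]_(g : {perm word l}) exponent (fun u => g u).

Definition pd21 : seq nat :=
  [:: 1; 2; 2; 2; 2; 2; 4; 4; 4; 4; 4; 4; 8; 8; 8; 8; 8; 8; 12; 12; 12]%N.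

From HB Require Import structures.
From mathcomp Require Import all_boot all_order all_algebra all_fingroup.
From Stdlib Require Import Reals.

Set Implicit Arguments.
Unset Strict Implicit.
Unset Printing Implicit Defensive.

(* For the linear kernel u |-> uG the difference of two inputs w.0.u and w.1.v
   vanishes before position i and is 1 at position i, so D^(i) is the minimum
   weight of the coset g_i + <g_(i+1), ..., g_(l-1)> spanned by the rows g_k of
   G.  For the lower-triangular G below (hence invertible) the lower bound on
   each coset weight is checked by enumeration and the upper bound by an
   explicit codeword; the bound on E_21 follows because u |-> uG is a kernel. *)

Fixpoint addbs (a b : bitseq) : bitseq :=
  match a, b with
  | x :: a', y :: b' => (x (+) y) :: addbs a' b'
  | [::], _ => b
  | _, [::] => a
  end.

Lemma nth_addbs a b j : nth false (addbs a b) j = nth false a j (+) nth false b j.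
Proof. by elim: a b j => [|x a IH] [|y b] [|j] //=; rewrite addbF. Qed.

Lemma size_addbs a b : size (addbs a b) = maxn (size a) (size b).
Proof.
elim: a b => [|x a IH] [|y b] //=; rewrite ?max0n ?maxn0 //.
by rewrite IH maxnSS.
Qed.

Lemma addbs0 a : addbs a [::] = a.
Proof. by case: a. Qed.

Lemma addbsA : associative addbs.
Proof. by elim=> [|x a IH] [|y b] [|z c] //=; rewrite ?IH ?addbA ?addbs0. Qed.

Fixpoint bcomb (f : nat -> bool) (rs : seq bitseq) : bitseq :=
  if rs is r :: rs' then addbs (if f 0 then r else [::]) (bcomb (f \o succn) rs')
  else [::].

Lemma nth_bcomb f rs j :
  nth false (bcomb f rs) j =
    \big[addb/false]_(k < size rs) (f k && nth false (nth [::] rs k) j).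
Proof.
elim: rs f => [|r rs IH] f /=; first by rewrite big_ord0 nth_nil.
by rewrite big_ord_recl nth_addbs IH; case: (f 0); rewrite //= nth_nil.
Qed.

Lemma eq_bcomb f g rs : {in gtn (size rs), f =1 g} -> bcomb f rs = bcomb g rs.
Proof.
elim: rs f g => [|r rs IH] f g //= fg.
by rewrite fg //; congr addbs; apply: IH => k ltk; apply: fg.
Qed.

Lemma size_bcomb f rs n : all (fun r => size r <= n) rs -> size (bcomb f rs) <= n.
Proof.
elim: rs f => [|r rs IH] f //= /andP[ler lers].
by rewrite size_addbs geq_max IH // andbT; case: (f 0).
Qed.

Lemma bcomb_cat f rs1 rs2 : {in gtn (size rs1), f =1 xpred0} ->
  bcomb f (rs1 ++ rs2) = bcomb (fun k => f (size rs1 + k)) rs2.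
Proof.
elim: rs1 f => [|r rs1 IH] f f0 /=; first exact: eq_bcomb.
rewrite f0 // IH => [|k ltk]; last exact: f0.
by apply: eq_bcomb => k _; rewrite addSn.
Qed.

Lemma sum_nth_count n (v : bitseq) : size v <= n ->
  \sum_(j < n) nth false v j = count idfun v.
Proof.
elim: n v => [|n IH] [|x v] //=; first by rewrite big_ord0.
  by move=> _; rewrite big1 // => j _; rewrite nth_nil.
by move=> lev; rewrite big_ord_recl IH.
Qed.

Fixpoint coset_wt_ge (d : nat) (v : bitseq) (rs : seq bitseq) : bool :=
  if rs is r :: rs' then coset_wt_ge d v rs' && coset_wt_ge d (addbs v r) rs'
  else d <= count idfun v.

Lemma coset_wt_geP d v rs f :
  coset_wt_ge d v rs -> d <= count idfun (addbs v (bcomb f rs)).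
Proof.
elim: rs v f => [|r rs IH] v f /=; first by rewrite addbs0.
case/andP=> ge_v ge_vr; case: (f 0) => /=; last exact: IH.
by rewrite addbsA; apply: IH.
Qed.

Lemma bigmin_le (T : eqType) (r : seq T) (P : pred T) (F : T -> nat) a x :
  x \in r -> P x -> \big[minn/a]_(y <- r | P y) F y <= F x.
Proof.
elim: r => [|h r IH] //; rewrite in_cons big_cons => /orP[/eqP <- -> | r_x Px].
  exact: geq_minl.
by case: (P h); [apply: leq_trans (geq_minr _ _) _|]; apply: IH.
Qed.

Section PartialDistance.
Variables (l : nat) (g : word l -> word l).

Lemma partial_dist_le (i : nat) (x y : word l) :
  split_pair i x y -> partial_dist g i <= dH (g x) (g y).
Proof.
move=> xy; apply: leq_trans (bigmin_le _ _ (mem_index_enum x) isT) _.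
exact: bigmin_le (mem_index_enum y) xy.
Qed.

Lemma partial_dist_ge (i d : nat) :
  d <= l -> (forall x y : word l, split_pair i x y -> d <= dH (g x) (g y)) ->
  d <= partial_dist g i.
Proof.
move=> le_dl ge_d; apply: (big_ind (leq d)) => // [m n dm dn|x _].
  by rewrite leq_min dm dn.
apply: (big_ind (leq d)) => // [m n dm dn|y]; last exact: ge_d.
by rewrite leq_min dm dn.
Qed.

End PartialDistance.

Lemma eq_partial_dist l (g1 g2 : word l -> word l) :
  g1 =1 g2 -> partial_dist g1 =1 partial_dist g2.
Proof.
move=> eq_g i; apply: eq_bigr => x _; apply: eq_bigr => y _.
by rewrite !eq_g.
Qed.

Lemma eq_exponent l (g1 g2 : word l -> word l) :
  g1 =1 g2 -> exponent g1 = exponent g2.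
Proof.
move=> eq_g; rewrite /exponent; congr Rmult; apply: eq_bigr => i _.
by rewrite (eq_partial_dist eq_g).
Qed.

Lemma bigRmax_ge (T : eqType) (r : seq T) (F : T -> R) x :
  x \in r -> (F x <= \big[Rmax/0%R]_(y <- r) F y)%R.
Proof.
elim: r => [|h r IH] //; rewrite in_cons big_cons => /orP[/eqP <- | r_x].
  exact: Rmax_l.
exact: Rle_trans (IH r_x) (Rmax_r _ _).
Qed.

Import GRing.Theory.
Local Open Scope ring_scope.

Lemma exponent_le_E_max l (G : 'M['F_2]_l) :
  G \in unitmx -> (exponent (linear_kernel G) <= E_max l)%R.
Proof.
move=> unitG; pose p := perm (can_inj (mulmxK unitG) : injective (linear_kernel G)).
rewrite -(@eq_exponent _ (fun u => p u)) => [|u]; last by rewrite permE.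
exact: (bigRmax_ge (fun q : {perm word l} => exponent (fun u => q u))
                   (mem_index_enum p)).
Qed.

Lemma F2_cases (x : 'F_2) : x = 0 \/ x = 1.
Proof.
have := ltn_ord x.
by case: x => -[|[|//]] lt_x _; [left | right]; apply: val_inj.
Qed.

Lemma F2_eq1P (x y : 'F_2) : (x == 1) = (y == 1) -> x = y.
Proof. by case: (F2_cases x) => ->; case: (F2_cases y) => ->. Qed.

Lemma F2_nat_eq1 (b : bool) : (b%:R == 1 :> 'F_2) = b.
Proof. by case: b. Qed.

Lemma F2_sum_eq1 n (F : 'I_n -> 'F_2) :
  (\sum_(k < n) F k == 1) = \big[addb/false]_(k < n) (F k == 1).
Proof.
apply: (big_morph (fun x : 'F_2 => x == 1)) => // x y.
by case: (F2_cases x) => ->; case: (F2_cases y) => ->.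
Qed.

Definition row_of_bits l (v : bitseq) : word l := \row_j (nth false v j)%:R.

Definition bits l (z : word l) (k : nat) : bool :=
  if insub k is Some j then z ord0 j == 1 else false.

Lemma bitsE l (z : word l) (j : 'I_l) : bits z j = (z ord0 j == 1).
Proof. by rewrite /bits valK. Qed.

Definition rows_mx l (rs : seq bitseq) : 'M['F_2]_l :=
  \matrix_(i, j) (nth false (nth [::] rs i) j)%:R.

Definition wt l (v : word l) : nat := dH 0 v.

Lemma dH_wt l (x y : word l) : dH x y = wt (x - y).
Proof. by apply: eq_bigr => j _; rewrite !mxE [0 == _]eq_sym subr_eq0. Qed.

Lemma wt_row_of_bits l (v : bitseq) :
  (size v <= l)%nat -> wt (row_of_bits l v) = count idfun v.
Proof.
move=> le_vl; rewrite -(sum_nth_count le_vl); apply: eq_bigr => j _.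
by rewrite !mxE; case: (nth false v j).
Qed.

Lemma wt_opp l (v : word l) : wt (- v) = wt v.
Proof. by apply: eq_bigr => j _; rewrite !mxE ![0 == _]eq_sym oppr_eq0. Qed.

Lemma bits_row_of_bits l (v : bitseq) k :
  (k < l)%nat -> bits (row_of_bits l v) k = nth false v k.
Proof. by move=> lt_kl; rewrite -[k]/(val (Ordinal lt_kl)) bitsE mxE F2_nat_eq1. Qed.

Definition lower_unitriangular (rs : seq bitseq) : bool :=
  all (fun i => (size (nth [::] rs i) <= i.+1)%nat && nth false (nth [::] rs i) i)
      (iota 0 (size rs)).

Lemma lower_unitriangularP rs i : lower_unitriangular rs -> (i < size rs)%nat ->
  (size (nth [::] rs i) <= i.+1)%nat && nth false (nth [::] rs i) i.
Proof. by move=> /allP unitri lt_i; apply: unitri; rewrite mem_iota. Qed.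

Definition pivot_word (i : nat) (s : bitseq) : bitseq := nseq i false ++ true :: s.

Lemma split_pair_pivot_word l (i : 'I_l) s :
  split_pair i 0 (row_of_bits l (pivot_word i s)).
Proof.
apply/andP; split; apply/forallP => j; apply/implyP; rewrite !mxE nth_cat size_nseq.
  by move=> lt_ji; rewrite lt_ji nth_nseq lt_ji.
by move=> /eqP->; rewrite ltnn subnn.
Qed.

Lemma split_pair_bits l (i : 'I_l) (x y : word l) : split_pair i x y ->
  {in gtn i, bits (x - y) =1 xpred0} /\ bits (x - y) i.
Proof.
case/andP=> /forallP prefix_xy /forallP pivot_xy; split; last first.
  by rewrite bitsE !mxE; have /implyP/(_ (eqxx _))/andP[/eqP-> /eqP->] := pivot_xy i.
move=> k /= lt_ki; have lt_kl := ltn_trans lt_ki (ltn_ord i).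
have /implyP := prefix_xy (Ordinal lt_kl).
move/(_ lt_ki)/eqP; rewrite -[k]/(val (Ordinal lt_kl)) bitsE !mxE => ->.
by rewrite addrN.
Qed.

Section RowsMatrix.

Variables (l : nat) (rs : seq bitseq).
Hypotheses (size_rs : size rs = l) (rs_unitri : lower_unitriangular rs).

Lemma mul_rows_mx (z : word l) :
  z *m rows_mx l rs = row_of_bits l (bcomb (bits z) rs).
Proof.
apply/rowP => j; apply: F2_eq1P.
rewrite !mxE F2_nat_eq1 nth_bcomb F2_sum_eq1 size_rs; apply: eq_bigr => k _.
by rewrite mxE bitsE; case: (nth _ _ _); case: (F2_cases (z ord0 k)) => ->.
Qed.

Lemma size_rows_le : all (fun r => size r <= l)%nat rs.
Proof.
apply/(all_nthP [::]) => i lt_i; rewrite -size_rs.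
have /andP[le_r _] := lower_unitriangularP rs_unitri lt_i.
exact: leq_trans le_r lt_i.
Qed.

Lemma wt_mul_rows_mx (z : word l) :
  wt (z *m rows_mx l rs) = count idfun (bcomb (bits z) rs).
Proof. by rewrite mul_rows_mx wt_row_of_bits // size_bcomb // size_rows_le. Qed.

Lemma rows_mx_unit : rows_mx l rs \in unitmx.
Proof.
have row_i (i : 'I_l) : (size (nth [::] rs i) <= i.+1)%nat && nth false (nth [::] rs i) i.
  by apply: lower_unitriangularP; rewrite ?size_rs.
have trig : is_trig_mx (rows_mx l rs).
  apply/is_trig_mxP => i j lt_ij; rewrite mxE nth_default //.
  by case/andP: (row_i i) => le_r _; apply: leq_trans le_r lt_ij.
rewrite unitmxE det_trig // big1 ?unitr1 // => i _.
by rewrite mxE; case/andP: (row_i i) => _ ->.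
Qed.

Lemma partial_dist_rows_mx_ge (i : 'I_l) d : (d <= l)%nat ->
  coset_wt_ge d (nth [::] rs i) (drop i.+1 rs) ->
  (d <= partial_dist (linear_kernel (rows_mx l rs)) i)%nat.
Proof.
move=> le_dl coset_i; apply: partial_dist_ge => // x y /split_pair_bits[prefix pivot].
rewrite dH_wt /linear_kernel -mulmxBl wt_mul_rows_mx.
have lt_i : (i < size rs)%nat by rewrite size_rs.
rewrite -(cat_take_drop i rs) bcomb_cat size_take lt_i //.
by rewrite (drop_nth [::] lt_i) /= addn0 pivot; apply: coset_wt_geP.
Qed.

Lemma partial_dist_rows_mx_le (i : 'I_l) s :
  (partial_dist (linear_kernel (rows_mx l rs)) i
     <= count idfun (bcomb (nth false (pivot_word i s)) rs))%nat.
Proof.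
apply: leq_trans (partial_dist_le _ (split_pair_pivot_word i s)) _.
rewrite dH_wt /linear_kernel -mulmxBl sub0r mulNmx wt_opp wt_mul_rows_mx.
rewrite (@eq_bcomb _ (nth false (pivot_word i s))) // => k.
by rewrite size_rs; apply: bits_row_of_bits.
Qed.

End RowsMatrix.

(* Row i of G, with the zeros after its diagonal entry omitted. *)
Definition kernel21_rows : seq bitseq := map (map (fun b : nat => b == 1%nat)) [::
  [:: 1];
  [:: 1; 1];
  [:: 1; 0; 1];
  [:: 1; 0; 0; 1];
  [:: 1; 0; 0; 0; 1];
  [:: 1; 0; 0; 0; 0; 1];
  [:: 1; 1; 0; 1; 0; 0; 1];
  [:: 0; 1; 0; 0; 1; 1; 0; 1];
  [:: 1; 0; 1; 1; 0; 1; 1; 0; 1];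
  [:: 1; 1; 1; 1; 0; 1; 0; 0; 0; 1];
  [:: 0; 1; 0; 1; 0; 1; 0; 0; 1; 1; 1];
  [:: 1; 1; 0; 0; 0; 0; 0; 0; 0; 1; 0; 1];
  [:: 1; 1; 1; 0; 1; 0; 0; 1; 0; 0; 1; 1; 1];
  [:: 1; 1; 0; 1; 1; 1; 1; 0; 1; 1; 1; 1; 1; 1];
  [:: 1; 1; 0; 0; 1; 1; 1; 1; 0; 1; 0; 0; 0; 0; 1];
  [:: 0; 0; 0; 0; 1; 1; 1; 1; 1; 0; 0; 1; 1; 0; 0; 1];
  [:: 0; 1; 1; 1; 0; 0; 1; 1; 0; 0; 1; 0; 0; 0; 1; 0; 1];
  [:: 0; 0; 1; 0; 1; 1; 0; 0; 1; 0; 1; 0; 1; 1; 0; 0; 0; 1];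
  [:: 1; 1; 1; 0; 1; 0; 1; 1; 0; 0; 0; 1; 0; 1; 1; 0; 1; 1; 1];
  [:: 0; 0; 1; 1; 1; 1; 1; 1; 1; 0; 1; 0; 0; 0; 0; 1; 1; 1; 0; 1];
  [:: 0; 1; 0; 0; 1; 1; 0; 1; 1; 1; 0; 0; 1; 0; 1; 1; 1; 0; 1; 0; 1]].

Definition G21 : 'M['F_2]_21 := rows_mx 21 kernel21_rows.

(* The coset of row i attains its minimum weight at the image of
   [pivot_word i (kernel21_witness_tail i)]. *)
Definition kernel21_witness_tail (i : nat) : bitseq :=
  match i with
  | 8 | 9 | 13 => [:: true]
  | 10 => [:: false; true; true; false; false; true]
  | _ => [::]
  end.

Lemma size_kernel21_rows : size kernel21_rows = 21.
Proof. by []. Qed.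

Lemma kernel21_rows_unitriangular : lower_unitriangular kernel21_rows.
Proof. by []. Qed.

Lemma kernel21_coset_wt : all (fun i =>
    coset_wt_ge (nth 0%nat pd21 i) (nth [::] kernel21_rows i) (drop i.+1 kernel21_rows))
  (iota 0 21).
Proof. by vm_compute. Qed.

Lemma kernel21_witness_wt : all (fun i =>
    count idfun (bcomb (nth false (pivot_word i (kernel21_witness_tail i))) kernel21_rows)
      == nth 0%nat pd21 i)
  (iota 0 21).
Proof. by vm_compute. Qed.

Lemma partial_dist_G21 (i : 'I_21) :
  partial_dist (linear_kernel G21) i = nth 0%nat pd21 i.
Proof.
have i_iota : (nat_of_ord i \in iota 0 21) by rewrite mem_iota ltn_ord.
apply/eqP; rewrite eqn_leq; apply/andP; split.
  rewrite -(eqP (allP kernel21_witness_wt i i_iota)).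
  exact: partial_dist_rows_mx_le size_kernel21_rows kernel21_rows_unitriangular _ _.
apply: partial_dist_rows_mx_ge size_kernel21_rows kernel21_rows_unitriangular _ _ _
         (allP kernel21_coset_wt i i_iota).
by apply: (allP (_ : all (leq^~ 21) pd21)); rewrite ?mem_nth.
Qed.

Theorem mainTheorem16 :
  (exists G : 'M['F_2]_21,
      G \in unitmx /\
      forall i : 'I_21, partial_dist (linear_kernel G) i = nth O pd21 i)
  /\
  (E_max 21 >= / INR 21 * \big[Rplus/0%R]_(i < 21) logb 21 (INR (nth O pd21 i)))%R.
Proof.
have unit_G21 : G21 \in unitmx.
  exact: rows_mx_unit size_kernel21_rows kernel21_rows_unitriangular.
split; first by exists G21; split; last exact: partial_dist_G21.
apply: Rle_ge; apply: Rle_trans (exponent_le_E_max unit_G21).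
by apply: Req_le; congr Rmult; apply: eq_bigr => i _; rewrite partial_dist_G21.
Qed.
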